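(* Consider the clique inference problem with nonnegative vertex potentials and the Potts clique potential $C(\mathbf{v})=\lambda\sum_{v\in V}n_v(\mathbf{v})^2$ with $\lambda>0$. Let $\hat{\mathbf{v}}$ be the assignment returned by the $\alpha$-pass algorithm and $\mathbf{v}^*$ an assignment maximizing $F$. Then $F(\hat{\mathbf{v}})\ge\frac{13}{15}F(\mathbf{v}^* )$.
   Context: Clique inference problem: there are $n$ vertices $1,\dots,n$, a finite set $V$ of values ($|V|\ge 2$), real vertex potentials $\psi_{jv}$ ($1\le j\le n$, $v\in V$), and a clique potential $C$ depending only on the counts $n_v(\mathbf{v})=|\{j:v_j=v\}|$. The objective is $F(\mathbf{v})=\sum_{j=1}^n\psi_{jv_j}+C(\mathbf{v})$ over $\mathbf{v}\in V^n$. The $\alpha$-pass algorithm: for each $\alpha\in V$, sort the vertices in decreasing order of $\psi_{j\alpha}-\max_{v\neq\alpha}\psi_{jv}$; for each $k\in\{1,\dots,n\}$ form the assignment giving the first $k$ sorted vertices the value $\alpha$ and every other vertex a value $v\ne\alpha$ maximizing $\psi_{jv}$; output the formed assignment with the largest $F$ over all $\alpha$ and $k$. *)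

From HB Require Import structures.
From mathcomp Require Import all_boot all_order all_algebra all_fingroup.
Set Implicit Arguments. Unset Strict Implicit. Unset Printing Implicit Defensive.
Import Order.TTheory GRing.Theory Num.Theory.
Local Open Scope ring_scope.

(* Vertices are 'I_n, values form a finite type V.  An assignment is a
   finite function {ffun 'I_n -> V}; psi j v is the vertex potential. *)

Section CliqueInference.
Variables (R : realFieldType) (V : finType) (n : nat).

Definition assignment := {ffun 'I_n -> V}.

Definition nval (x : assignment) (v : V) : nat := #|[set j | x j == v]|.

Definition objF (psi : 'I_n -> V -> R) (C : assignment -> R) (x : assignment) : R :=
  \sum_(j < n) psi j (x j) + C x.

Definition potts (lam : R) (x : assignment) : R :=
  lam * \sum_(v : V) ((nval x v)%:R ^+ 2).

(* Tie-breaking data of an alpha-pass run: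
   - c a j : the value v <> a maximizing psi j v chosen for vertex j in pass a;
   - s a   : the sorted order of vertices in pass a (position p holds vertex s a p). *)
Definition best_other_choice (psi : 'I_n -> V -> R) (c : V -> 'I_n -> V) : Prop :=
  forall a j, c a j != a /\ (forall v, v != a -> psi j v <= psi j (c a j)).

(* psi_{j a} - max_{v <> a} psi_{j v}; equals psi j a - psi j (c a j) when
   c satisfies best_other_choice. *)
Definition margin (psi : 'I_n -> V -> R) (c : V -> 'I_n -> V) (a : V) (j : 'I_n) : R :=
  psi j a - psi j (c a j).

Definition sorted_order (psi : 'I_n -> V -> R) (c : V -> 'I_n -> V)
    (s : V -> {perm 'I_n}) : Prop :=
  forall a (p q : 'I_n), (p < q)%N -> margin psi c a (s a q) <= margin psi c a (s a p).

Definition formed (c : V -> 'I_n -> V) (s : V -> {perm 'I_n}) (a : V) (k : nat)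
  : assignment :=
  [ffun j => if (val ((s a)^-1%g j) < k)%N then a else c a j].

(* xhat is a possible output of the alpha-pass algorithm (for the given
   tie-breaking data): the formed assignment with largest F over all a and
   1 <= k <= n. *)
Definition alpha_pass_output (psi : 'I_n -> V -> R) (C : assignment -> R)
    (c : V -> 'I_n -> V) (s : V -> {perm 'I_n}) (xhat : assignment) : Prop :=
  best_other_choice psi c /\ sorted_order psi c s /\
  (exists a0 k0, (0 < k0 <= n)%N /\ xhat = formed c s a0 k0) /\
  (forall a k, (0 < k <= n)%N -> objF psi C (formed c s a k) <= objF psi C xhat).

End CliqueInference.

(* For a set [T] of labels and [b \in T], the pass [alpha = b] with [k] the number
   of vertices that [xstar] labels in [T] forms an assignment whose vertex
   potential is at least the [xstar]-potential outside this block plus the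
   [xstar]-mass of [b], and whose clique potential is at least [lam k^2].  Taking for [T]
   the label of largest count, the two largest, the three largest and all labels
   yields lower bounds on [F xhat]; a fixed convex combination of them, together
   with polynomial inequalities between the top counts [X >= Y >= Z] and the
   remaining counts, dominates [13/15 F xstar]. *)

From HB Require Import structures.
From mathcomp Require Import all_boot all_order all_algebra all_fingroup.
From mathcomp Require Import ring lra.
Set Implicit Arguments. Unset Strict Implicit. Unset Printing Implicit Defensive.
Import Order.TTheory GRing.Theory Num.Theory.
Local Open Scope ring_scope.

Lemma ler_sum_card_sep (R : realDomainType) (I : finType) (A B : {set I})
    (f g : I -> R) :
  #|A| = #|B| -> (forall i j, i \in A -> j \in B -> g j <= f i) ->
  \sum_(j in B) g j <= \sum_(i in A) f i.
Proof.
move=> AB gf; have [A0|[i0 Ai0]] := set_0Vmem A.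
  have B0 : B = set0 by apply/eqP; rewrite -cards_eq0 -AB A0 cards0.
  by rewrite A0 B0 !big_set0.
have [i1 Ai1 f_min] := arg_minP f Ai0.
apply: (@le_trans _ _ (\sum_(j in B) f i1)); first by apply: ler_sum => j Bj; apply: gf.
by rewrite sumr_const -AB -sumr_const; apply: ler_sum => i Ai; apply: f_min.
Qed.

Lemma sum_setC_split (M : nmodType) (I : finType) (S : {set I}) (F : I -> M) :
  \sum_i F i = \sum_(i in S) F i + \sum_(i in ~: S) F i.
Proof. by rewrite (bigID (mem S)) /=; congr (_ + _); apply: eq_bigl => i; rewrite inE. Qed.

Lemma sumr_set2 (M : nmodType) (I : finType) (i1 i2 : I) (F : I -> M) :
  i1 != i2 -> \sum_(i in [set i1; i2]) F i = F i1 + F i2.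
Proof. by move=> i12; rewrite big_setU1 ?big_set1 ?inE. Qed.

Lemma sumr_set3 (M : nmodType) (I : finType) (i1 i2 i3 : I) (F : I -> M) :
  i1 != i2 -> i1 != i3 -> i2 != i3 ->
  \sum_(i in [set i1; i2; i3]) F i = F i1 + F i2 + F i3.
Proof.
move=> i12 i13 i23.
have -> : [set i1; i2; i3] = i1 |: [set i2; i3] by apply/setP => i; rewrite !inE orbA.
by rewrite big_setU1 /= ?sumr_set2 ?addrA // !inE negb_or i12.
Qed.

Lemma sum_sqr_le_mul_max (R : numDomainType) (I : finType) (P : pred I)
    (f : I -> R) (z : R) :
  (forall i, P i -> 0 <= f i <= z) ->
  \sum_(i | P i) f i ^+ 2 <= z * \sum_(i | P i) f i.
Proof.
move=> f_bnd; rewrite mulr_sumr; apply: ler_sum => i /f_bnd /andP[f_ge0 f_le].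
by rewrite expr2 ler_wpM2r.
Qed.

Lemma sum_sqr_le_sqr_sum (R : numDomainType) (I : finType) (P : pred I)
    (f : I -> R) :
  (forall i, P i -> 0 <= f i) ->
  \sum_(i | P i) f i ^+ 2 <= (\sum_(i | P i) f i) ^+ 2.
Proof.
move=> f_ge0; rewrite [X in _ <= X]expr2 mulr_sumr; apply: ler_sum => i Pi.
rewrite expr2 ler_wpM2r ?f_ge0 // (bigD1 i) //= lerDl.
by apply: sumr_ge0 => j /andP[Pj _]; apply: f_ge0.
Qed.

Lemma exists_top_two (T : finType) (f : T -> nat) : (1 < #|T|)%N ->
  exists v1 v2, [/\ v1 != v2, forall v, (f v <= f v1)%N
                & forall v, v != v1 -> (f v <= f v2)%N].
Proof.
move=> T_gt1; have [v0 _] : {v0 | v0 \in T} by apply/sigW/card_gt0P; apply: ltnW.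
have [v1 _ f_v1] := @arg_maxnP T v0 xpredT f isT.
have [w0] : exists w0, w0 \in [set~ v1] by apply/card_gt0P; rewrite cardsC1 -subn1 subn_gt0.
rewrite in_setC1 => w0v1; have [v2 v2v1 f_v2] := @arg_maxnP T w0 (predC1 v1) f w0v1.
exists v1, v2; split=> [|v|v vv1]; [by rewrite eq_sym | exact: f_v1 | exact: f_v2].
Qed.

Definition perm_prefix n (s : {perm 'I_n}) (k : nat) : {set 'I_n} :=
  [set j | (s^-1%g j < k)%N].

Lemma card_perm_prefix n (s : {perm 'I_n}) k : (k <= n)%N -> #|perm_prefix s k| = k.
Proof.
move=> kn.
have -> : perm_prefix s k = s @: (widen_ord kn @: [set: 'I_k]).
  apply/setP => j; rewrite inE; apply/idP/imsetP.
    move=> jk; exists (s^-1%g j); last by rewrite permKV.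
    by apply/imsetP; exists (Ordinal jk) => //; apply: val_inj.
  by case=> _ /imsetP[q _ ->] ->; rewrite permK /= ltn_ord.
rewrite card_imset; last exact: perm_inj.
rewrite card_imset ?cardsT ?card_ord //.
by move=> p q /(congr1 val) /= /ord_inj.
Qed.

Section FormedAssignment.
Variables (R : realFieldType) (V : finType) (n : nat) (psi : 'I_n -> V -> R).
Variables (c : V -> 'I_n -> V) (s : V -> {perm 'I_n}).

Lemma formedE a k j :
  formed c s a k j = if j \in perm_prefix (s a) k then a else c a j.
Proof. by rewrite ffunE inE. Qed.

(* Relative to [c a], giving [a] to a block of vertices gains the sum of their
   margins, and the sorted prefix of the same size has the largest such sum. *)
Lemma formed_vertex_ge a (S : {set 'I_n}) :
  sorted_order psi c s -> (#|S| <= n)%N ->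
  \sum_(j in S) psi j a + \sum_(j in ~: S) psi j (c a j)
    <= \sum_(j < n) psi j (formed c s a #|S| j).
Proof.
move=> sorted_s Sn; set T := perm_prefix (s a) #|S|; set m := margin psi c a.
have gain (U : {set 'I_n}) :
  \sum_(j in U) psi j a + \sum_(j in ~: U) psi j (c a j) =
  \sum_(j < n) psi j (c a j) + \sum_(j in U) m j.
  have -> : \sum_(j in U) psi j a = \sum_(j in U) (psi j (c a j) + m j).
    by apply: eq_bigr => j _; rewrite /m /margin; ring.
  by rewrite big_split (sum_setC_split U (fun j => psi j (c a j))) /=; ring.
have -> : \sum_(j < n) psi j (formed c s a #|S| j) =
          \sum_(j in T) psi j a + \sum_(j in ~: T) psi j (c a j).
  rewrite (sum_setC_split T); congr (_ + _); apply: eq_bigr => j.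
    by rewrite formedE => ->.
  by rewrite formedE inE => /negbTE ->.
rewrite !gain lerD2l (big_setID T) [X in _ <= X](big_setID S) setIC lerD2l.
apply: ler_sum_card_sep.
  apply/eqP; rewrite -(eqn_add2l #|T :&: S|) {2}setIC !cardsID.
  by rewrite card_perm_prefix.
move=> i j; rewrite !inE -leqNgt => /andP[_ iT] /andP[jT _].
by have := sorted_s a _ _ (leq_trans iT jT); rewrite !permKV.
Qed.

Lemma potts_formed_ge (lam : R) a k :
  best_other_choice psi c -> (k <= n)%N -> 0 <= lam ->
  lam * k%:R ^+ 2 <= potts lam (formed c s a k).
Proof.
move=> best kn lam_ge0; rewrite /potts ler_wpM2l // (bigD1 a) //=.
have -> : nval (formed c s a k) a = k.
  rewrite -[RHS](card_perm_prefix (s a) kn); apply: eq_card => j.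
  rewrite inE formedE; case: ifP => _; first by rewrite eqxx.
  by have [/negbTE -> _] := best a j.
by rewrite lerDl; apply: sumr_ge0 => v _; apply: sqr_ge0.
Qed.

End FormedAssignment.

Section PottsArithmetic.
Variable R : realFieldType.

Lemma potts_quad_ge0_small_third (X Y Z : R) :
  0 <= Z -> 2 * Z <= Y -> Y <= X ->
  0 <= 2*X*X - 9*Y*Y - 11*Z*Z + 8*X*Y + 4*X*Z + 4*Y*Z.
Proof.
move=> Z_ge0 ZY YX.
have Z_YZ : 0 <= Z * (Y - 2 * Z) by apply: mulr_ge0; lra.
have XY_Y : 0 <= (X - Y) * Y by apply: mulr_ge0; lra.
have XY_Z : 0 <= (X - Y) * Z by apply: mulr_ge0; lra.
nra.
Qed.

Lemma potts_quad_ge0_large_third (X Y Z : R) :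
  Z <= Y -> Y <= 2 * Z -> Y <= X ->
  0 <= 2*X*X - 10*Y*Y - 10*Z*Z + 6*X*Y + 6*X*Z + 6*Y*Z.
Proof.
move=> ZY YZ YX.
have YZ_ZY : 0 <= (Y - Z) * (2 * Z - Y) by apply: mulr_ge0; lra.
have XY_Y : 0 <= (X - Y) * Y by apply: mulr_ge0; lra.
have XY_Z : 0 <= (X - Y) * Z by apply: mulr_ge0; lra.
nra.
Qed.

Lemma potts_tail_ge0 (X Y Z D W : R) :
  0 <= Z -> Z <= Y -> Y <= X -> 0 <= D -> W <= Z * D -> W <= D * D ->
  0 <= 4 * (X + Y + Z) * D + 2 * D * D - 13 * W.
Proof.
move=> Z_ge0 ZY YX D_ge0 WZ WD.
have XZ_D : 0 <= (X - Z) * D by apply: mulr_ge0; lra.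
have YZ_D : 0 <= (Y - Z) * D by apply: mulr_ge0; lra.
have [DZ|ZD] := lerP D Z.
  have ZD_D : 0 <= (Z - D) * D by apply: mulr_ge0; lra.
  nra.
have DZ_D : 0 <= (D - Z) * D by apply: mulr_ge0; lra.
nra.
Qed.

(* Write [B1], [B2(aj)], [B3(aj, ak)], [B4(ai)] for the hypotheses on [F] in
   order, and let [ai] be the largest mass.  Then [15 F] dominates
   [11 B1 + 2 B4(ai) + 2 B2(aj)] when [2 Z <= Y], and [12 B1 + 2 B4(ai) + B3(aj, ak)]
   otherwise; the quadratic remainders are the three lemmas above. *)
Lemma potts_13_15_bound (L P F a1 a2 a3 X Y Z D W : R) :
  0 < L -> 0 <= a1 -> 0 <= a2 -> 0 <= a3 -> a1 + a2 + a3 <= P ->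
  0 <= Z -> Z <= Y -> Y <= X -> 0 <= D -> W <= Z * D -> W <= D * D ->
  P + L * X ^+ 2 <= F ->
  P - a1 + L * (X + Y) ^+ 2 <= F ->
  P - a2 + L * (X + Y) ^+ 2 <= F ->
  P - (a2 + a3) + L * (X + Y + Z) ^+ 2 <= F ->
  P - (a1 + a3) + L * (X + Y + Z) ^+ 2 <= F ->
  P - (a1 + a2) + L * (X + Y + Z) ^+ 2 <= F ->
  a1 + L * (X + Y + Z + D) ^+ 2 <= F ->
  a2 + L * (X + Y + Z + D) ^+ 2 <= F ->
  a3 + L * (X + Y + Z + D) ^+ 2 <= F ->
  13%:R / 15%:R * (P + L * (X ^+ 2 + Y ^+ 2 + Z ^+ 2 + W)) <= F.
Proof.
move=> L_gt0 a1_ge0 a2_ge0 a3_ge0 aP Z_ge0 ZY YX D_ge0 WZ WD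
  B1 B2a B2b B3a B3b B3c B4a B4b B4c.
have tail := mulr_ge0 (ltW L_gt0) (potts_tail_ge0 Z_ge0 ZY YX D_ge0 WZ WD).
rewrite -subr_ge0.
have -> : F - 13%:R / 15%:R * (P + L * (X ^+ 2 + Y ^+ 2 + Z ^+ 2 + W)) =
  (15 * F - 13 * (P + L * (X ^+ 2 + Y ^+ 2 + Z ^+ 2 + W))) / 15 by field.
apply: divr_ge0; last by lra.
have [YZ|ZY2] := lerP (2 * Z) Y.
  have quad := mulr_ge0 (ltW L_gt0) (potts_quad_ge0_small_third Z_ge0 YZ YX).
  have E ai aj : 15 * F - 13 * (P + L * (X ^+ 2 + Y ^+ 2 + Z ^+ 2 + W)) =
     11 * (F - (P + L * X ^+ 2)) + 2 * (F - (ai + L * (X + Y + Z + D) ^+ 2))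
     + 2 * (F - (P - aj + L * (X + Y) ^+ 2)) + 2 * (ai - aj)
     + L * (2*X*X - 9*Y*Y - 11*Z*Z + 8*X*Y + 4*X*Z + 4*Y*Z)
     + L * (4 * (X + Y + Z) * D + 2 * D * D - 13 * W) by ring.
  by have [a21|a12] := lerP a2 a1; [rewrite (E a1 a2) | rewrite (E a2 a1)]; lra.
have quad := mulr_ge0 (ltW L_gt0) (potts_quad_ge0_large_third ZY (ltW ZY2) YX).
have E ai aj ak : 15 * F - 13 * (P + L * (X ^+ 2 + Y ^+ 2 + Z ^+ 2 + W)) =
   12 * (F - (P + L * X ^+ 2)) + 2 * (F - (ai + L * (X + Y + Z + D) ^+ 2))
   + (F - (P - (aj + ak) + L * (X + Y + Z) ^+ 2)) + (2 * ai - aj - ak)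
   + L * (2*X*X - 10*Y*Y - 10*Z*Z + 6*X*Y + 6*X*Z + 6*Y*Z)
   + L * (4 * (X + Y + Z) * D + 2 * D * D - 13 * W) by ring.
have [a21|a12] := lerP a2 a1; have [a31|a13] := lerP a3 a1; have [a32|a23] := lerP a3 a2.
all: first [ rewrite (E a1 a2 a3); lra | rewrite (E a2 a1 a3); lra | rewrite (E a3 a1 a2); lra ].
Qed.

End PottsArithmetic.

Section LabelBlocks.
Variables (R : realFieldType) (V : finType) (n : nat) (psi : 'I_n -> V -> R).
Variable x : assignment V n.

Definition label_mass (v : V) : R := \sum_(j | x j == v) psi j v.

Lemma sum_label_mass (T : {set V}) :
  \sum_(j in [set j | x j \in T]) psi j (x j) = \sum_(v in T) label_mass v.
Proof.
rewrite (partition_big x (mem T)) => [|j]; last by rewrite inE.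
apply: eq_bigr => v vT; apply: eq_big => j; last by move=> /andP[_ /eqP ->].
by rewrite inE; case: (x j =P v) => [->|_]; rewrite ?andbT ?andbF.
Qed.

Lemma card_labelled (T : {set V}) :
  #|[set j | x j \in T]| = (\sum_(v in T) nval x v)%N.
Proof.
rewrite -sum1_card (partition_big x (mem T)) => [|j]; last by rewrite inE.
apply: eq_bigr => v vT; rewrite /nval -sum1_card; apply: eq_bigl => j.
by rewrite !inE; case: (x j =P v) => [->|_]; rewrite ?andbT ?andbF.
Qed.

Lemma sum_nval : (\sum_v nval x v)%N = n.
Proof.
rewrite -(eq_bigl _ _ (@in_setT V)) -card_labelled -[RHS]card_ord -cardsT.
by apply: eq_card => j; rewrite !inE.
Qed.

Lemma sum_label_mass_all : \sum_v label_mass v = \sum_(j < n) psi j (x j).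
Proof.
rewrite -(eq_bigl _ _ (@in_setT V)) -sum_label_mass.
by apply: eq_bigl => j; rewrite !inE.
Qed.

End LabelBlocks.

Section AlphaPassApproximation.
Variables (R : realFieldType) (V : finType) (n : nat) (psi : 'I_n -> V -> R) (lam : R).
Variables (c : V -> 'I_n -> V) (s : V -> {perm 'I_n}) (xhat xstar : assignment V n).
Hypotheses (psi_ge0 : forall j v, 0 <= psi j v) (lam_gt0 : 0 < lam).
Hypothesis xhat_out : alpha_pass_output psi (potts lam) c s xhat.

Local Notation cnt := (nval xstar).
Local Notation mass := (label_mass psi xstar).
Local Notation P := (\sum_(j < n) psi j (xstar j)).
Local Notation Fhat := (objF psi (potts lam) xhat).

(* Outside the block, the best value other than [b] is at least what [xstar]
   gives, because [b \in T]. *)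
Lemma alpha_pass_block_ge (T : {set V}) b :
  b \in T -> (0 < \sum_(v in T) cnt v)%N ->
  P - \sum_(v in T) mass v + mass b + lam * (\sum_(v in T) (cnt v)%:R) ^+ 2 <= Fhat.
Proof.
move=> bT cnt_gt0; have [best [sorted_s [_ xhat_max]]] := xhat_out.
set S := [set j | xstar j \in T].
have cardS : #|S| = (\sum_(v in T) cnt v)%N := card_labelled xstar T.
have Sn : (#|S| <= n)%N by rewrite -[X in (_ <= X)%N]card_ord max_card.
apply: le_trans (xhat_max b #|S| _); last by rewrite cardS cnt_gt0 -cardS.
rewrite -natr_sum -cardS /objF; apply: lerD; last exact: potts_formed_ge (ltW _).
apply: le_trans (formed_vertex_ge b sorted_s Sn).
rewrite (sum_setC_split S) -sum_label_mass [_ + _ - _]addrC addKr addrC.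
apply: lerD.
- rewrite [X in _ <= X](bigID (fun j => xstar j == b)) /= -[X in X <= _]addr0.
  apply: lerD; last exact: sumr_ge0.
  rewrite le_eqVlt; apply/orP; left; apply/eqP; apply: eq_bigl => j.
  by rewrite inE; case: (xstar j =P b) => [->|_]; rewrite ?andbT ?andbF.
- apply: ler_sum => j; rewrite !inE => jT.
  by apply: (best b j).2; apply: contraNneq jT => ->.
Qed.

Lemma label_mass_ge0 v : 0 <= mass v.
Proof. by apply: sumr_ge0 => j _; apply: psi_ge0. Qed.

Lemma alpha_pass_n_gt0 : (0 < n)%N.
Proof. by have [_ [_ [[a [k [/andP[k_gt0 kn] _]]] _]]] := xhat_out; apply: leq_trans kn. Qed.

Variables v1 v2 : V.
Hypotheses (v12 : v1 != v2) (cnt_v1_max : forall v, (cnt v <= cnt v1)%N).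
Hypothesis cnt_v2_max : forall v, v != v1 -> (cnt v <= cnt v2)%N.

Local Notation X := (cnt v1)%:R.
Local Notation Y := (cnt v2)%:R.

Lemma nval_top_gt0 : (0 < cnt v1)%N.
Proof.
have := alpha_pass_n_gt0; rewrite -{1}(sum_nval xstar) !lt0n; apply: contraNneq => cnt0.
by apply/eqP; apply: big1 => v _; apply/eqP; rewrite -leqn0 -cnt0.
Qed.

Lemma alpha_pass_top_block_ge (T : {set V}) b : v1 \in T -> b \in T ->
  P - \sum_(v in T) mass v + mass b + lam * (\sum_(v in T) (cnt v)%:R) ^+ 2 <= Fhat.
Proof.
move=> v1T bT; apply: alpha_pass_block_ge => //.
by rewrite (bigD1 v1) //= (leq_trans nval_top_gt0) ?leq_addr.
Qed.

Lemma alpha_pass_ge_top1 : P + lam * X ^+ 2 <= Fhat.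
Proof.
have := alpha_pass_top_block_ge (set11 v1) (set11 v1).
by rewrite !big_set1 subrK.
Qed.

Lemma alpha_pass_ge_top2 b : b \in [set v1; v2] ->
  P - (mass v1 + mass v2) + mass b + lam * (X + Y) ^+ 2 <= Fhat.
Proof. by move=> bT; have := alpha_pass_top_block_ge (setU11 _ _) bT; rewrite !sumr_set2. Qed.

Lemma alpha_pass_ge_all b : mass b + lam * n%:R ^+ 2 <= Fhat.
Proof.
have := alpha_pass_top_block_ge (in_setT v1) (in_setT b).
rewrite !(eq_bigl _ _ (@in_setT V)) sum_label_mass_all -natr_sum sum_nval.
by rewrite subrr add0r.
Qed.

Lemma alpha_pass_approx_three_labels v3 :
  v3 != v1 -> v3 != v2 -> (forall v, v != v1 -> v != v2 -> (cnt v <= cnt v3)%N) ->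
  13%:R / 15%:R * objF psi (potts lam) xstar <= Fhat.
Proof.
move=> v31 v32 cnt_v3_max; set T3 := [set v1; v2; v3].
have [v13 v23] : v1 != v3 /\ v2 != v3 by rewrite ![_ == v3]eq_sym.
set Z : R := (cnt v3)%:R; set D := \sum_(v in ~: T3) (cnt v)%:R : R.
have cnt_rest_le v : v \in ~: T3 -> (cnt v <= cnt v3)%N.
  by rewrite !inE !negb_or => /andP[/andP[vv1 vv2] _]; apply: cnt_v3_max.
have WZ : \sum_(v in ~: T3) (cnt v)%:R ^+ 2 <= Z * D.
  by apply: sum_sqr_le_mul_max => v /cnt_rest_le; rewrite ler0n ler_nat.
have WD : \sum_(v in ~: T3) (cnt v)%:R ^+ 2 <= D * D.
  by rewrite -expr2; apply: sum_sqr_le_sqr_sum => v _; apply: ler0n.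
have sumT3 (F : V -> R) : \sum_v F v = F v1 + F v2 + F v3 + \sum_(v in ~: T3) F v.
  by rewrite (sum_setC_split T3) sumr_set3.
have n_eq : n%:R = X + Y + Z + D :> R by rewrite -{1}(sum_nval xstar) natr_sum sumT3.
have mass_le : mass v1 + mass v2 + mass v3 <= P.
  rewrite -sum_label_mass_all sumT3 lerDl.
  by apply: sumr_ge0 => v _; apply: label_mass_ge0.
have top3 b : b \in T3 ->
    P - (mass v1 + mass v2 + mass v3) + mass b + lam * (X + Y + Z) ^+ 2 <= Fhat.
  by move=> bT; have := alpha_pass_top_block_ge _ bT; rewrite !sumr_set3 //; apply; rewrite !inE eqxx.
have top_all b := alpha_pass_ge_all b; rewrite n_eq in top_all.
have [v1T v2T v3T] : [/\ v1 \in T3, v2 \in T3 & v3 \in T3] by rewrite !inE !eqxx !orbT.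
rewrite /objF /potts sumT3.
apply: (potts_13_15_bound lam_gt0 (label_mass_ge0 v1) (label_mass_ge0 v2) (label_mass_ge0 v3)
  mass_le (ler0n _ _) _ _ (sumr_ge0 _ (fun v _ => ler0n _ _)) WZ WD alpha_pass_ge_top1
  _ _ _ _ _ (top_all v1) (top_all v2) (top_all v3)).
- by rewrite ler_nat cnt_v2_max.
- by rewrite ler_nat.
- by have := alpha_pass_ge_top2 (set22 v1 v2); lra.
- by have := alpha_pass_ge_top2 (set21 v1 v2); lra.
- by have := top3 v1 v1T; lra.
- by have := top3 v2 v2T; lra.
- by have := top3 v3 v3T; lra.
Qed.

Lemma alpha_pass_approx_two_labels : (forall v, (v == v1) || (v == v2)) ->
  13%:R / 15%:R * objF psi (potts lam) xstar <= Fhat.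
Proof.
move=> two_labels.
have sum2 (F : V -> R) : \sum_v F v = F v1 + F v2.
  by rewrite -sumr_set2 //; apply: eq_bigl => v; rewrite !inE two_labels.
have n_eq : n%:R = X + Y + 0 + 0 :> R by rewrite -{1}(sum_nval xstar) natr_sum sum2 !addr0.
have mass_le : mass v1 + mass v2 + 0 <= P by rewrite -sum_label_mass_all sum2 addr0.
have top_all b := alpha_pass_ge_all b; rewrite n_eq in top_all.
have mass1_ge0 := label_mass_ge0 v1.
rewrite /objF /potts sum2.
have -> : X ^+ 2 + Y ^+ 2 = X ^+ 2 + Y ^+ 2 + 0 ^+ 2 + 0 :> R by rewrite expr0n !addr0.
apply: (potts_13_15_bound lam_gt0 mass1_ge0 (label_mass_ge0 v2) (lexx 0) mass_le
  (lexx 0) (ler0n _ _) _ (lexx 0) _ _ alpha_pass_ge_top1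
  _ _ _ _ _ (top_all v1) (top_all v2) _).
- by rewrite ler_nat.
- by rewrite mulr0.
- by rewrite mulr0.
- by have := alpha_pass_ge_top2 (set22 v1 v2); lra.
- by have := alpha_pass_ge_top2 (set21 v1 v2); lra.
- by have := alpha_pass_ge_top2 (set21 v1 v2); rewrite !addr0; lra.
- by have := alpha_pass_ge_top2 (set22 v1 v2); rewrite !addr0; lra.
- by have := alpha_pass_ge_top2 (set21 v1 v2); rewrite !addr0; lra.
- by have := top_all v1; lra.
Qed.

End AlphaPassApproximation.

Theorem theorem4 (R : realFieldType) (V : finType) (n : nat)
    (psi : 'I_n -> V -> R) (lam : R)
    (c : V -> 'I_n -> V) (s : V -> {perm 'I_n})
    (xhat xstar : assignment V n) :
  (1 < #|V|)%N ->
  (forall j v, 0 <= psi j v) ->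
  0 < lam ->
  alpha_pass_output psi (potts lam) c s xhat ->
  (forall x, objF psi (potts lam) x <= objF psi (potts lam) xstar) ->
  objF psi (potts lam) xhat >= (13%:R / 15%:R) * objF psi (potts lam) xstar.
Proof.
move=> V_gt1 psi_ge0 lam_gt0 xhat_out _.
have [v1 [v2 [v12 cnt_v1_max cnt_v2_max]]] := exists_top_two (nval xstar) V_gt1.
pose other := [pred v | (v != v1) && (v != v2)].
case: (pickP other) => [u u_other | no_other].
  have [v3 /andP[v31 v32] cnt_v3_max] := @arg_maxnP V u other (nval xstar) u_other.
  apply: (alpha_pass_approx_three_labels psi_ge0 lam_gt0 xhat_out v12 cnt_v1_max cnt_v2_max
    v31 v32) => v vv1 vv2.
  by apply: cnt_v3_max; apply/andP.
apply: (alpha_pass_approx_two_labels psi_ge0 lam_gt0 xhat_out v12 cnt_v1_max).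
by move=> v; have := no_other v; rewrite /= -negb_or => /negbFE.
Qed.
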